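(* Fix $L>0$. For parameters $a,b$ call a barrier a pair $(\phi,\psi)$ solving $$-\phi''=\phi(1-\phi-a\psi),\quad -\psi''=\psi(1-b\phi-\psi)\ \text{ in }(0,L),\qquad \phi(0)=\phi(L)=0,\ \psi(0)=\psi(L)=1,$$ with $0<\phi(x)<1$ and $0<\psi(x)<1$ for all $x\in(0,L)$. Let $(a_n,b_n)_{n\in\mathbb{N}}$ be a sequence with $a_n>0$ and $b_n>\max\{a_n,1\}$ for all $n$, such that a barrier exists for the parameters $a_n,b_n$ for every $n$. Suppose $(a_n,b_n)\to(a,b)$ where $a>0$, $b>\max\{a,1\}$ and $a>1$. Then a barrier exists for the parameters $a,b$. *)

From Stdlib Require Import Reals.
From Coquelicot Require Import Coquelicot.
Open Scope R_scope.

Definition cont_on_closed (L : R) (f : R -> R) : Prop :=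
  forall x, 0 <= x <= L ->
    filterlim f (within (fun y => 0 <= y <= L) (locally x)) (locally (f x)).

Definition twice_diff_on_open (L : R) (f f' f'' : R -> R) : Prop :=
  forall x, 0 < x < L -> is_derive f x (f' x) /\ is_derive f' x (f'' x).

Definition barrier (L a b : R) (phi psi : R -> R) : Prop :=
  cont_on_closed L phi /\ cont_on_closed L psi /\
  exists phi' phi'' psi' psi'' : R -> R,
    twice_diff_on_open L phi phi' phi'' /\
    twice_diff_on_open L psi psi' psi'' /\
    (forall x, 0 < x < L ->
        - phi'' x = phi x * (1 - phi x - a * psi x) /\
        - psi'' x = psi x * (1 - b * phi x - psi x)) /\
    phi 0 = 0 /\ phi L = 0 /\ psi 0 = 1 /\ psi L = 1 /\
    (forall x, 0 < x < L -> 0 < phi x < 1 /\ 0 < psi x < 1).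

Definition barrier_exists (L a b : R) : Prop :=
  exists phi psi : R -> R, barrier L a b phi psi.

From Stdlib Require Import Reals Lra Lia Cantor ClassicalEpsilon.
From Coquelicot Require Import Coquelicot.
Open Scope R_scope.

(** Barriers for bounded parameters satisfy uniform a priori estimates.  As
    [0 < phi, psi < 1], the equations bound [phi''] and [psi''] by [1 + C] when
    [a, b <= C]; since [phi] and [psi] vary by at most [1] on [[L/4, 3L/4]], the mean
    value theorem then bounds [phi'] and [psi'], so that [phi], [psi], their first and
    their second derivatives are Lipschitz with constants depending only on [L] and [C].
    A diagonal extraction along a countable dense set of points yields a subsequence
    along which [phi_n], [psi_n], [phi_n'] and [psi_n'] converge pointwise; the
    quadratic Taylor bounds pass to the limit, so the limit is a classical solution
    with [0 <= phi, psi <= 1].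

    The strict inequalities come from the equations.  An interior zero of [phi >= 0] is
    a double zero, so [phi = 0] by uniqueness for [|phi''| <= K |phi|] (likewise for
    [psi], which is [1] at [0]); where [phi = 1] the equation gives [phi'' = a psi > 0],
    which is impossible at a maximum (likewise [psi'' = b phi]).  It remains to see that
    the limit [phi] is not identically [0].  Each barrier has a point where
    [phi_n'' < 0], that is [a_n psi_n < 1 - phi_n < 1], so [a psi <= 1] at some limit
    point.  But if [phi = 0], then [psi] is concave with boundary values [1], hence
    [psi = 1], which contradicts [a > 1]. *)

Set Implicit Arguments.
Unset Strict Implicit.

(** * Calculus on an interval *)

Definition lipschitz_on (D : R -> Prop) (k : R) (f : R -> R) : Prop :=
  forall x y, D x -> D y -> Rabs (f x - f y) <= k * Rabs (x - y).

Lemma lipschitz_on_mono (D D' : R -> Prop) (k k' : R) (f : R -> R) :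
  (forall x, D x -> D' x) -> k <= k' -> lipschitz_on D' k f -> lipschitz_on D k' f.
Proof.
  intros HD Hk Hl x y Hx Hy.
  generalize (Hl x y (HD x Hx) (HD y Hy)) (Rabs_pos (x - y)); nra.
Qed.

Section Interval.

Variable L : R.

Lemma MVT_open (f df : R -> R) (u v : R) :
  (forall x, 0 < x < L -> is_derive f x (df x)) -> 0 < u < L -> 0 < v < L ->
  exists c, 0 < c < L /\ Rmin u v <= c <= Rmax u v /\ f v - f u = df c * (v - u).
Proof.
  intros Hd Hu Hv.
  assert (Hmin : 0 < Rmin u v) by (apply Rmin_glb_lt; lra).
  assert (Hmax : Rmax u v < L) by (apply Rmax_lub_lt; lra).
  destruct (MVT_gen f u v df) as [c [Hc Heq]].
  - intros x Hx; apply Hd; simpl in Hx; lra.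
  - intros x Hx; simpl in Hx; apply continuity_pt_filterlim.
    apply (ex_derive_continuous f x); exists (df x); apply Hd; lra.
  - exists c; simpl in Hc; repeat split; lra.
Qed.

Lemma lipschitz_of_derive_bound (K : R) (f df : R -> R) :
  (forall x, 0 < x < L -> is_derive f x (df x)) ->
  (forall x, 0 < x < L -> Rabs (df x) <= K) ->
  lipschitz_on (fun x => 0 < x < L) K f.
Proof.
  intros Hd Hb x y Hx Hy.
  destruct (MVT_open Hd Hy Hx) as [c [Hc [_ ->]]].
  rewrite Rabs_mult; apply Rmult_le_compat_r; [apply Rabs_pos | now apply Hb].
Qed.

Lemma derive_bound_of_unit_valued (K : R) (f df : R -> R) : 0 < L -> 0 <= K ->
  (forall x, 0 < x < L -> is_derive f x (df x)) ->
  (forall x, 0 < x < L -> 0 <= f x <= 1) ->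
  lipschitz_on (fun x => 0 < x < L) K df ->
  forall x, 0 < x < L -> Rabs (df x) <= 2 / L + K * L.
Proof.
  intros HL HK Hd Hf Hl x Hx.
  assert (H1 : 0 < L / 4 < L) by lra; assert (H3 : 0 < 3 * L / 4 < L) by lra.
  destruct (MVT_open Hd H1 H3) as [c [Hc [_ Ec]]].
  assert (Hdc : Rabs (df c) <= 2 / L).
  { apply Rle_div_r; [lra|].
    replace (Rabs (df c) * L) with (2 * Rabs (df c * (3 * L / 4 - L / 4)))
      by (rewrite Rabs_mult, (Rabs_pos_eq (3 * L / 4 - L / 4)) by lra; field).
    rewrite <- Ec; generalize (Hf _ H1) (Hf _ H3); unfold Rabs; destruct (Rcase_abs _); lra. }
  assert (Hxc : Rabs (x - c) <= L) by (unfold Rabs; destruct (Rcase_abs _); lra).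
  generalize (Hl x c Hx Hc) (Rabs_triang_inv (df x) (df c)); intros; nra.
Qed.

Lemma taylor_remainder_le (K : R) (f df : R -> R) : 0 <= K ->
  (forall x, 0 < x < L -> is_derive f x (df x)) ->
  lipschitz_on (fun x => 0 < x < L) K df ->
  forall x y, 0 < x < L -> 0 < y < L ->
    Rabs (f y - f x - df x * (y - x)) <= K * Rabs (y - x) * Rabs (y - x).
Proof.
  intros HK Hd Hl x y Hx Hy.
  destruct (MVT_open Hd Hx Hy) as [c [Hc [Hcb ->]]].
  replace (df c * (y - x) - df x * (y - x)) with ((df c - df x) * (y - x)) by ring.
  rewrite Rabs_mult; apply Rmult_le_compat_r; [apply Rabs_pos|].
  apply (Rle_trans _ (K * Rabs (c - x))); [now apply Hl|].
  apply Rmult_le_compat_l; [exact HK|].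
  unfold Rmin, Rmax in Hcb; destruct (Rle_dec x y);
    unfold Rabs; destruct (Rcase_abs _); destruct (Rcase_abs _); lra.
Qed.

Lemma is_derive_of_quadratic_remainder (K : R) (f : R -> R) (x l : R) : 0 <= K -> 0 < x < L ->
  (forall y, 0 < y < L -> Rabs (f y - f x - l * (y - x)) <= K * Rabs (y - x) * Rabs (y - x)) ->
  is_derive f x l.
Proof.
  intros HK Hx Hq; apply is_derive_Reals; intros eps Heps.
  assert (Hd : 0 < Rmin (Rmin x (L - x)) (eps / (K + 1))).
  { apply Rmin_pos; [apply Rmin_pos; lra | apply Rdiv_lt_0_compat; lra]. }
  exists (mkposreal _ Hd); intros h Hh0 Hh; simpl in Hh.
  generalize (Rmin_l (Rmin x (L - x)) (eps / (K + 1))) (Rmin_r (Rmin x (L - x)) (eps / (K + 1)))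
    (Rmin_l x (L - x)) (Rmin_r x (L - x)); intros Hm1 Hm2 Hm3 Hm4.
  assert (Hy : 0 < x + h < L) by (unfold Rabs in Hh; destruct (Rcase_abs h); lra).
  specialize (Hq (x + h) Hy); replace (x + h - x) with h in Hq by ring.
  replace ((f (x + h) - f x) / h - l) with ((f (x + h) - f x - l * h) / h) by (field; auto).
  assert (Hah : 0 < Rabs h) by (apply Rabs_pos_lt; auto).
  rewrite Rabs_div by auto; apply Rlt_div_l; [lra|].
  assert (Hsmall : Rabs h * (K + 1) < eps) by (apply Rlt_div_r; lra).
  nra.
Qed.

Lemma cont_on_closed_of_lipschitz (M : R) (f : R -> R) : 0 <= M ->
  lipschitz_on (fun x => 0 <= x <= L) M f -> cont_on_closed L f.
Proof.
  intros HM Hl x Hx; apply filterlim_locally; intros eps.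
  assert (Hd : 0 < eps / (M + 1)) by (apply Rdiv_lt_0_compat; [apply cond_pos | lra]).
  exists (mkposreal _ Hd); intros y Hy Hyd; simpl in Hy.
  change (Rabs (f y - f x) < eps); change (Rabs (y - x) < eps / (M + 1)) in Hy.
  apply Rlt_div_r in Hy; [|lra].
  generalize (Hl y x Hyd Hx) (cond_pos eps) (Rabs_pos (y - x)); nra.
Qed.

Lemma interior_approx (f : R -> R) (x eps : R) : 0 < L -> cont_on_closed L f ->
  0 <= x <= L -> 0 < eps ->
  exists x', 0 < x' < L /\ Rabs (x' - x) < eps /\ Rabs (f x' - f x) < eps.
Proof.
  intros HL Hc Hx He.
  destruct (proj1 (filterlim_locally f (f x)) (Hc x Hx) (mkposreal _ He)) as [d Hd].
  set (m := Rmin d eps).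
  assert (Hm : 0 < m) by (apply Rmin_pos; [apply cond_pos | lra]).
  assert (Hm1 : m <= d) by apply Rmin_l; assert (Hm2 : m <= eps) by apply Rmin_r.
  set (t := Rmin (1 / 2) (m / (2 * (L + 1)))).
  assert (Ht : 0 < t) by (apply Rmin_pos; [lra | apply Rdiv_lt_0_compat; lra]).
  assert (Ht1 : t <= 1 / 2) by apply Rmin_l.
  assert (Ht2 : t * (2 * (L + 1)) <= m) by (apply Rle_div_r; [lra | apply Rmin_r]).
  (* a point between [x] and the midpoint [L / 2] lies in the open interval *)
  exists (x + t * (L / 2 - x)).
  assert (Hdist : Rabs (x + t * (L / 2 - x) - x) < m).
  { replace (x + t * (L / 2 - x) - x) with (t * (L / 2 - x)) by ring.
    rewrite Rabs_mult, (Rabs_pos_eq t) by lra.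
    assert (Rabs (L / 2 - x) <= L / 2) by (unfold Rabs; destruct (Rcase_abs _); lra).
    nra. }
  split; [nra | split; [lra|]].
  apply (Hd (x + t * (L / 2 - x))); [change (Rabs (x + t * (L / 2 - x) - x) < d); lra | nra].
Qed.

Lemma lipschitz_on_closure (M : R) (f : R -> R) : 0 < L -> 0 <= M -> cont_on_closed L f ->
  lipschitz_on (fun x => 0 < x < L) M f -> lipschitz_on (fun x => 0 <= x <= L) M f.
Proof.
  intros HL HM Hc Hl x y Hx Hy; apply Rle_plus_epsilon; intros e He.
  set (e' := e / (2 * M + 3)).
  assert (He' : 0 < e') by (apply Rdiv_lt_0_compat; lra).
  assert (He'2 : e' * (2 * M + 3) = e) by (unfold e'; field; lra).
  destruct (interior_approx HL Hc Hx He') as [x' [Hx' [Hx1 Hx2]]].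
  destruct (interior_approx HL Hc Hy He') as [y' [Hy' [Hy1 Hy2]]].
  specialize (Hl x' y' Hx' Hy').
  assert (Rabs (x' - y') <= Rabs (x - y) + 2 * e')
    by (unfold Rabs in *; repeat destruct (Rcase_abs _); lra).
  assert (Rabs (f x - f y) <= Rabs (f x' - f y') + 2 * e')
    by (unfold Rabs in *; repeat destruct (Rcase_abs _); lra).
  nra.
Qed.

Lemma second_derive_neg_of_peak (f f' f'' : R -> R) (x0 : R) : 0 < L ->
  cont_on_closed L f -> twice_diff_on_open L f f' f'' ->
  0 < x0 < L -> f 0 < f x0 -> f L < f x0 -> exists c, 0 < c < L /\ f'' c < 0.
Proof.
  intros HL Hc Hd Hx H0 H1.
  assert (Hd1 : forall x, 0 < x < L -> is_derive f x (f' x)) by (intros; now apply Hd).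
  assert (Hd2 : forall x, 0 < x < L -> is_derive f' x (f'' x)) by (intros; now apply Hd).
  destruct (@interior_approx f 0 (Rmin x0 (f x0 - f 0)) HL Hc) as [e [He [He1 He2]]];
    [lra | apply Rmin_pos; lra |].
  destruct (@interior_approx f L (Rmin (L - x0) (f x0 - f L)) HL Hc) as [g [Hg [Hg1 Hg2]]];
    [lra | apply Rmin_pos; lra |].
  assert (Hleft : e < x0 /\ f e < f x0).
  { generalize (Rmin_l x0 (f x0 - f 0)) (Rmin_r x0 (f x0 - f 0)).
    unfold Rabs in *; repeat destruct (Rcase_abs _); lra. }
  assert (Hright : x0 < g /\ f g < f x0).
  { generalize (Rmin_l (L - x0) (f x0 - f L)) (Rmin_r (L - x0) (f x0 - f L)).
    unfold Rabs in *; repeat destruct (Rcase_abs _); lra. }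
  destruct (MVT_open Hd1 He Hx) as [c1 [Hc1 [Hb1 E1]]].
  destruct (MVT_open Hd1 Hx Hg) as [c2 [Hc2 [Hb2 E2]]].
  rewrite Rmin_left, Rmax_right in Hb1 by lra; rewrite Rmin_left, Rmax_right in Hb2 by lra.
  assert (P1 : 0 < f' c1) by nra; assert (P2 : f' c2 < 0) by nra.
  assert (Hc12 : c1 < c2) by (destruct (Req_dec c1 c2) as [->|]; lra).
  destruct (MVT_open Hd2 Hc1 Hc2) as [c [Hc' [_ E3]]].
  exists c; split; [exact Hc' | nra].
Qed.

Lemma second_derive_pos_of_valley (f f' f'' : R -> R) (x0 : R) : 0 < L ->
  cont_on_closed L f -> twice_diff_on_open L f f' f'' ->
  0 < x0 < L -> f x0 < f 0 -> f x0 < f L -> exists c, 0 < c < L /\ 0 < f'' c.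
Proof.
  intros HL Hc Hd Hx H0 H1.
  destruct (@second_derive_neg_of_peak (fun x => - f x) (fun x => - f' x) (fun x => - f'' x) x0 HL)
    as [c [Hc' Hneg]]; try lra.
  - intros x Hx'; apply (filterlim_comp _ _ _ f Ropp _ (locally (f x))); [now apply Hc|].
    apply (filterlim_opp (f x)).
  - intros x Hx'; split; [apply (is_derive_opp f) | apply (is_derive_opp f')]; now apply Hd.
  - exists c; split; [exact Hc' | lra].
Qed.

Lemma is_derive_interior_min (f : R -> R) (x0 l : R) : 0 < x0 < L -> is_derive f x0 l ->
  (forall x, 0 < x < L -> f x0 <= f x) -> l = 0.
Proof.
  intros Hx Hd Hm; apply is_derive_Reals in Hd.
  assert (pr : derivable_pt f x0) by (exists l; exact Hd).
  rewrite <- (derive_pt_eq_0 f x0 l pr Hd).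
  apply (deriv_minimum f 0 L); try lra; intros; apply Hm; lra.
Qed.

Lemma second_derive_interior_max (f f' : R -> R) (x0 D : R) : 0 < x0 < L ->
  (forall x, 0 < x < L -> is_derive f x (f' x)) -> is_derive f' x0 D ->
  (forall x, 0 < x < L -> f x <= f x0) -> D <= 0.
Proof.
  intros Hx Hd HD Hmax; apply Rnot_lt_le; intros HDpos.
  assert (Hcrit : f' x0 = 0).
  { assert (Hopp : - f' x0 = 0).
    { apply (@is_derive_interior_min (fun x => - f x) x0);
        [exact Hx | apply (is_derive_opp f), Hd, Hx |].
      intros x Hx'; generalize (Hmax x Hx'); lra. }
    lra. }
  apply is_derive_Reals in HD; destruct (HD (D / 2)) as [d Hdd]; [lra|].
  set (h := Rmin d (L - x0) / 2).
  assert (Hh : 0 < h < d /\ x0 + h < L).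
  { generalize (Rmin_l d (L - x0)) (Rmin_r d (L - x0)) (cond_pos d); intros.
    assert (0 < Rmin d (L - x0)) by (apply Rmin_pos; [apply cond_pos | lra]).
    unfold h; lra. }
  destruct (MVT_cor2 f f' x0 (x0 + h)) as [c [Ec Hc]]; [lra| |].
  { intros c Hc; apply is_derive_Reals, Hd; lra. }
  (* [f'] increases through its zero at [x0], so [f] increases just to the right of [x0] *)
  assert (Hq : D / 2 < f' c / (c - x0)).
  { assert (Ht : Rabs (c - x0) < d) by (rewrite Rabs_pos_eq; lra).
    specialize (Hdd (c - x0) ltac:(lra) Ht).
    replace (x0 + (c - x0)) with c in Hdd by ring; rewrite Hcrit, Rminus_0_r in Hdd.
    unfold Rabs in Hdd; destruct (Rcase_abs _); lra. }
  assert (Hpos : 0 < f' c).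
  { replace (f' c) with (f' c / (c - x0) * (c - x0)) by (field; lra).
    apply Rmult_lt_0_compat; lra. }
  generalize (Hmax (x0 + h) ltac:(lra)); nra.
Qed.

Lemma gronwall_vanish (C : R) (E E' : R -> R) (x0 : R) : 0 < x0 < L ->
  (forall x, 0 < x < L -> is_derive E x (E' x)) ->
  (forall x, 0 < x < L -> Rabs (E' x) <= C * E x) ->
  E x0 = 0 -> forall x, 0 < x < L -> E x <= 0.
Proof.
  intros Hx0 HE Hb E0 x Hx.
  (* [E y * exp (s C y)] is monotone from [x0] towards [x], for the right sign [s] *)
  assert (Hsign : exists s, s * s = 1 /\ s * (x - x0) <= 0 /\
            forall y, 0 < y < L -> 0 <= s * (E' y + s * C * E y)).
  { destruct (Rle_dec x0 x); [exists (-1) | exists 1];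
      (split; [ring | split; [lra|]]); intros y Hy;
      generalize (Hb y Hy); unfold Rabs; destruct (Rcase_abs _); lra. }
  destruct Hsign as [s [Hs2 [Hsx Hsd]]].
  set (G := fun y => E y * exp (s * C * y)).
  assert (HG : forall y, 0 < y < L -> is_derive G y ((E' y + s * C * E y) * exp (s * C * y))).
  { intros y Hy.
    replace ((E' y + s * C * E y) * exp (s * C * y))
      with (plus (mult (E' y) (exp (s * C * y))) (mult (E y) (s * C * exp (s * C * y))))
      by (unfold plus, mult; simpl; ring).
    apply (is_derive_mult E (fun y => exp (s * C * y)));
      [now apply HE | | intros; apply Rmult_comm].
    auto_derive; [exact I | ring]. }
  destruct (MVT_open HG Hx0 Hx) as [c [Hc [_ EG]]].
  set (P := E' c + s * C * E c) in EG.
  assert (HP : P * (x - x0) <= 0).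
  { replace (P * (x - x0)) with ((s * P) * (s * (x - x0)))
      by (rewrite <- (Rmult_1_l (P * (x - x0))), <- Hs2; ring).
    generalize (Hsd c Hc); unfold P; nra. }
  assert (HGx : G x <= 0).
  { assert (G x0 = 0) by (unfold G; rewrite E0; ring).
    generalize (exp_pos (s * C * c)); nra. }
  unfold G in HGx; generalize (exp_pos (s * C * x)); nra.
Qed.

Lemma linear_ode_zero (K : R) (f f' f'' : R -> R) (x0 : R) : 0 <= K ->
  twice_diff_on_open L f f' f'' ->
  (forall x, 0 < x < L -> Rabs (f'' x) <= K * Rabs (f x)) ->
  0 < x0 < L -> f x0 = 0 -> f' x0 = 0 -> forall x, 0 < x < L -> f x = 0.
Proof.
  intros HK Hd Hb Hx0 F0 F1 x Hx.
  set (E := fun y => f y * f y + f' y * f' y).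
  assert (HE : forall y, 0 < y < L -> is_derive E y (2 * f y * f' y + 2 * f' y * f'' y)).
  { intros y Hy; destruct (Hd y Hy) as [D1 D2].
    replace (2 * f y * f' y + 2 * f' y * f'' y)
      with (plus (plus (mult (f' y) (f y)) (mult (f y) (f' y)))
                 (plus (mult (f'' y) (f' y)) (mult (f' y) (f'' y))))
      by (unfold plus, mult; simpl; ring).
    apply (is_derive_plus (fun y => f y * f y) (fun y => f' y * f' y));
      [apply (is_derive_mult f f) | apply (is_derive_mult f' f')]; auto; intros; apply Rmult_comm. }
  assert (HE' : forall y, 0 < y < L ->
            Rabs (2 * f y * f' y + 2 * f' y * f'' y) <= (1 + K) * E y).
  { intros y Hy; specialize (Hb y Hy); unfold E.
    assert (Htri : Rabs (2 * f y * f' y + 2 * f' y * f'' y)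
                   <= 2 * Rabs (f y) * Rabs (f' y) + 2 * Rabs (f' y) * Rabs (f'' y)).
    { eapply Rle_trans; [apply Rabs_triang|]; rewrite !Rabs_mult, (Rabs_pos_eq 2) by lra; lra. }
    assert (Hsq : forall z, z * z = Rabs z * Rabs z)
      by (intros z; rewrite <- Rabs_mult; symmetry; apply Rabs_pos_eq; nra).
    rewrite (Hsq (f y)), (Hsq (f' y)).
    assert (Hamgm : 2 * Rabs (f y) * Rabs (f' y)
                    <= Rabs (f y) * Rabs (f y) + Rabs (f' y) * Rabs (f' y))
      by (generalize (pow2_ge_0 (Rabs (f y) - Rabs (f' y))); nra).
    assert (Hlin : Rabs (f' y) * Rabs (f'' y) <= K * Rabs (f y) * Rabs (f' y))
      by (generalize (Rabs_pos (f' y)); nra).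
    nra. }
  generalize (gronwall_vanish Hx0 HE HE' ltac:(unfold E; rewrite F0, F1; ring) Hx).
  unfold E; intros; nra.
Qed.

End Interval.

(** * Pointwise limits and diagonal extraction *)

Lemma is_lim_seq_bounded (u : nat -> R) (l : R) :
  is_lim_seq u l -> exists B, forall n, Rabs (u n) <= B.
Proof.
  intros Hu.
  destruct (maj_by_pos u (exist _ l (proj1 (is_lim_seq_Reals u l) Hu))) as [B [_ HB]].
  now exists B.
Qed.

Lemma is_lim_seq_Rabs_le (u : nat -> R) (l B : R) :
  is_lim_seq u l -> (forall n, Rabs (u n) <= B) -> Rabs l <= B.
Proof.
  intros Hu Hb; apply is_lim_seq_abs in Hu.
  exact (is_lim_seq_le _ _ _ _ Hb Hu (is_lim_seq_const B)).
Qed.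

Lemma is_lim_seq_between (u : nat -> R) (l lo hi : R) :
  is_lim_seq u l -> (forall n, lo <= u n <= hi) -> lo <= l <= hi.
Proof.
  intros Hu Hb; split.
  - exact (is_lim_seq_le _ _ _ _ (fun n => proj1 (Hb n)) (is_lim_seq_const lo) Hu).
  - exact (is_lim_seq_le _ _ _ _ (fun n => proj2 (Hb n)) Hu (is_lim_seq_const hi)).
Qed.

Lemma lipschitz_on_pointwise_lim (D : R -> Prop) (k : R) (fn : nat -> R -> R) (f : R -> R) :
  (forall n, lipschitz_on D k (fn n)) ->
  (forall x, D x -> is_lim_seq (fun n => fn n x) (f x)) -> lipschitz_on D k f.
Proof.
  intros Hl Hf x y Hx Hy.
  apply (is_lim_seq_Rabs_le (u := fun n => fn n x - fn n y)); [|intros n; now apply Hl].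
  exact (is_lim_seq_minus' _ _ _ _ (Hf x Hx) (Hf y Hy)).
Qed.

Lemma is_lim_seq_moving_point (G : nat -> R -> R) (w : nat -> R) (c l M : R) :
  is_lim_seq w c -> is_lim_seq (fun n => G n c) l ->
  (forall n, Rabs (G n (w n) - G n c) <= M * Rabs (w n - c)) ->
  is_lim_seq (fun n => G n (w n)) l.
Proof.
  intros Hw HG Hb.
  assert (Hz : is_lim_seq (fun n => M * Rabs (w n - c)) 0).
  { replace (Finite 0) with (Rbar_mult M (Rabs (c - c)))
      by (simpl; f_equal; rewrite Rminus_eq_0, Rabs_R0; ring).
    apply is_lim_seq_scal_l; change (Finite (Rabs (c - c))) with (Rbar_abs (c - c)).
    apply is_lim_seq_abs, is_lim_seq_minus'; [exact Hw | apply is_lim_seq_const]. }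
  apply (is_lim_seq_le_le (fun n => G n c - M * Rabs (w n - c)) _
                          (fun n => G n c + M * Rabs (w n - c))).
  - intros n; specialize (Hb n); unfold Rabs at 1 in Hb; destruct (Rcase_abs _); lra.
  - replace (Finite l) with (Rbar_minus l 0) by (simpl; f_equal; ring).
    now apply is_lim_seq_minus'.
  - replace (Finite l) with (Rbar_plus l 0) by (simpl; f_equal; ring).
    now apply is_lim_seq_plus'.
Qed.

Lemma is_derive_pointwise_lim (L K : R) (fn dfn : nat -> R -> R) (f df : R -> R) : 0 <= K ->
  (forall n x, 0 < x < L -> is_derive (fn n) x (dfn n x)) ->
  (forall n, lipschitz_on (fun x => 0 < x < L) K (dfn n)) ->
  (forall x, 0 < x < L -> is_lim_seq (fun n => fn n x) (f x)) ->
  (forall x, 0 < x < L -> is_lim_seq (fun n => dfn n x) (df x)) ->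
  forall x, 0 < x < L -> is_derive f x (df x).
Proof.
  intros HK Hd Hl Hf Hdf x Hx.
  apply (is_derive_of_quadratic_remainder HK Hx); intros y Hy.
  apply (is_lim_seq_Rabs_le (u := fun n => fn n y - fn n x - dfn n x * (y - x))).
  - apply is_lim_seq_minus'; [apply is_lim_seq_minus'; auto|].
    apply is_lim_seq_mult'; [auto | apply is_lim_seq_const].
  - intros n; exact (taylor_remainder_le HK (Hd n) (Hl n) Hx Hy).
Qed.

Lemma is_lim_seq_inv_succ : is_lim_seq (fun j => / (INR j + 1)) 0.
Proof.
  assert (H : is_lim_seq (fun j => INR j + 1) p_infty).
  { eapply is_lim_seq_plus; [apply is_lim_seq_INR | apply is_lim_seq_const | reflexivity]. }
  exact (is_lim_seq_inv _ _ H ltac:(discriminate)).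
Qed.

Lemma bounded_extraction (u : nat -> R) (B : R) : (forall n, Rabs (u n) <= B) ->
  exists phi : nat -> nat, (forall j, (j <= phi j)%nat) /\ ex_finite_lim_seq (fun j => u (phi j)).
Proof.
  intros HB; destruct (ex_LimSup_seq u) as [[l| |] Hl]; simpl in Hl.
  (* indices [n >= j] with [u n] within [1 / (j + 1)] of the (finite) limsup *)
  - assert (Hex : forall j, exists n, (j <= n)%nat /\ Rabs (u n - l) <= / (INR j + 1)).
    { intros j.
      assert (He : 0 < / (INR j + 1)) by (apply Rinv_0_lt_compat; generalize (pos_INR j); lra).
      destruct (Hl (mkposreal _ He)) as [H1 [N H2]]; simpl in *.
      destruct (H1 (max j N)) as [n [Hn Hn2]]; exists n; split; [lia|].
      specialize (H2 n ltac:(lia)); unfold Rabs; destruct (Rcase_abs _); lra. }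
    destruct (choice _ Hex) as [phi Hphi].
    exists phi; split; [intros j; apply Hphi | exists l].
    apply (is_lim_seq_le_le (fun j => l - / (INR j + 1)) _ (fun j => l + / (INR j + 1))).
    + intros j; destruct (Hphi j) as [_ H]; unfold Rabs in H; destruct (Rcase_abs _); lra.
    + replace (Finite l) with (Rbar_minus l 0) by (simpl; f_equal; ring).
      apply is_lim_seq_minus'; [apply is_lim_seq_const | apply is_lim_seq_inv_succ].
    + replace (Finite l) with (Rbar_plus l 0) by (simpl; f_equal; ring).
      apply is_lim_seq_plus'; [apply is_lim_seq_const | apply is_lim_seq_inv_succ].
  - destruct (Hl B O) as [n [_ Hn]]; specialize (HB n).
    unfold Rabs in HB; destruct (Rcase_abs _); lra.
  - destruct (Hl (- B)) as [N HN]; specialize (HN N (le_n _)); specialize (HB N).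
    unfold Rabs in HB; destruct (Rcase_abs _); lra.
Qed.

(* The composite of the extractions chosen by [E] successively for [U 0], ..., [U k]. *)
Fixpoint nested_extraction (E : (nat -> R) -> nat -> nat) (U : nat -> nat -> R) (k : nat)
  : nat -> nat :=
  match k with
  | O => E (U O)
  | S k' => fun j => nested_extraction E U k' (E (fun n => U (S k') (nested_extraction E U k' n)) j)
  end.

Lemma diagonal_extraction (U : nat -> nat -> R) (B : R) : (forall k n, Rabs (U k n) <= B) ->
  exists d : nat -> nat, (forall n, (n <= d n)%nat) /\
    forall k, ex_finite_lim_seq (fun n => U k (d n)).
Proof.
  intros HB.
  assert (Hex : forall u : nat -> R, exists phi : nat -> nat, (forall j, (j <= phi j)%nat) /\
            ((forall n, Rabs (u n) <= B) -> ex_finite_lim_seq (fun j => u (phi j)))).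
  { intros u; destruct (classic (forall n, Rabs (u n) <= B)) as [Hu|Hu].
    - destruct (bounded_extraction Hu) as [phi [H1 H2]]; now exists phi.
    - exists (fun j => j); split; [auto | intros H; contradiction]. }
  destruct (choice _ Hex) as [E HE].
  assert (Hgrow : forall k j, (j <= nested_extraction E U k j)%nat).
  { induction k as [|k IHk]; intros j; simpl; [apply HE|].
    eapply Nat.le_trans; [|apply IHk]; apply HE. }
  assert (Hcv : forall k, ex_finite_lim_seq (fun j => U k (nested_extraction E U k j))).
  { intros [|k]; simpl; [apply (proj2 (HE (U O))) |
      apply (proj2 (HE (fun n => U (S k) (nested_extraction E U k n))))]; intros; apply HB. }
  assert (Hnest : forall k m, (k <= m)%nat -> forall j,
            exists i, (j <= i)%nat /\ nested_extraction E U m j = nested_extraction E U k i).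
  { intros k m Hkm; induction Hkm as [|m Hkm IH]; intros j; [now exists j|].
    destruct (IH (E (fun n => U (S m) (nested_extraction E U m n)) j)) as [i [Hi Hi2]].
    exists i; split; [eapply Nat.le_trans; [apply HE | exact Hi] | exact Hi2]. }
  exists (fun n => nested_extraction E U n n); split; [intros; apply Hgrow|].
  intros k; destruct (Hcv k) as [l Hl]; exists l.
  apply is_lim_seq_Reals; apply is_lim_seq_Reals in Hl.
  intros eps Heps; destruct (Hl eps Heps) as [N HN]; exists (max k N); intros n Hn.
  destruct (Hnest k n ltac:(lia) n) as [i [Hi ->]]; apply HN; lia.
Qed.

Definition grid_point (L : R) (k : nat) : R :=
  L * (INR (fst (Cantor.of_nat k)) + 1)
    / (INR (fst (Cantor.of_nat k)) + INR (snd (Cantor.of_nat k)) + 2).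

Lemma grid_point_in (L : R) (k : nat) : 0 < L -> 0 < grid_point L k < L.
Proof.
  intros HL; unfold grid_point; set (i := INR _); set (j := INR _).
  assert (0 <= i) by apply pos_INR; assert (0 <= j) by apply pos_INR.
  split; [apply Rdiv_lt_0_compat; nra | apply Rlt_div_l; nra].
Qed.

Lemma grid_point_dense (L x eps : R) : 0 < L -> 0 < x < L -> 0 < eps ->
  exists k, Rabs (x - grid_point L k) < eps.
Proof.
  intros HL Hx He; set (t := x / L).
  assert (Ht : 0 < t < 1) by (unfold t; split; [apply Rdiv_lt_0_compat | apply Rlt_div_l]; lra).
  assert (H1 : 0 < L / eps) by (apply Rdiv_lt_0_compat; lra).
  assert (H2 : 0 < 2 / (1 - t)) by (apply Rdiv_lt_0_compat; lra).
  destruct (nfloor_ex (L / eps + 2 / (1 - t)) ltac:(lra)) as [b0 Hb0].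
  set (b := S b0); assert (Hb : L / eps + 2 / (1 - t) < INR b) by (unfold b; rewrite S_INR; lra).
  assert (Htb : 0 < t * INR b) by nra.
  destruct (nfloor1_ex _ Htb) as [a Ha].
  assert (Hb2 : 2 < (1 - t) * INR b)
    by (assert (2 / (1 - t) < INR b) by lra; apply Rlt_div_l in H; lra).
  assert (Hb3 : L < eps * INR b) by (assert (L / eps < INR b) by lra; apply Rlt_div_l in H; lra).
  assert (Hab : (a + 2 <= b)%nat).
  { apply INR_le; rewrite plus_INR; replace (INR 2) with 2 by (simpl; ring); nra. }
  (* the grid point L (a + 1) / b, i.e. i = a and j = b - a - 2 *)
  exists (Cantor.to_nat (a, (b - a - 2)%nat)).
  unfold grid_point; rewrite Cantor.cancel_of_to; cbn [fst snd].
  replace (INR a + INR (b - a - 2) + 2) with (INR b) by (rewrite !minus_INR by lia; simpl; lra).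
  replace x with (L * t) by (unfold t; field; lra).
  replace (L * t - L * (INR a + 1) / INR b) with (L * (t * INR b - (INR a + 1)) / INR b)
    by (field; lra).
  rewrite Rabs_div, (Rabs_pos_eq (INR b)) by lra; apply Rlt_div_l; [lra|].
  rewrite Rabs_mult, Rabs_pos_eq by lra.
  assert (Rabs (t * INR b - (INR a + 1)) <= 1) by (unfold Rabs; destruct (Rcase_abs _); lra).
  nra.
Qed.

Lemma equi_lipschitz_cv (L M : R) (G : nat -> R -> R) : 0 < L -> 0 <= M ->
  (forall n, lipschitz_on (fun x => 0 < x < L) M (G n)) ->
  (forall k, ex_finite_lim_seq (fun n => G n (grid_point L k))) ->
  forall x, 0 < x < L -> ex_finite_lim_seq (fun n => G n x).
Proof.
  intros HL HM Hl Hq x Hx; apply ex_lim_seq_cauchy_corr; intros eps.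
  assert (Hd : 0 < eps / (4 * (M + 1))) by (apply Rdiv_lt_0_compat; [apply cond_pos | lra]).
  destruct (grid_point_dense HL Hx Hd) as [k Hk].
  destruct (Hq k) as [l Hlk]; apply is_lim_seq_Reals in Hlk.
  destruct (Hlk (eps / 4)) as [N HN]; [generalize (cond_pos eps); lra|].
  exists N; intros n m Hn Hm.
  generalize (HN n Hn) (HN m Hm); unfold R_dist; intros Hn' Hm'.
  pose proof (grid_point_in k HL) as Hq'.
  generalize (Hl n x _ Hx Hq') (Hl m x _ Hx Hq'); intros Hln Hlm.
  assert (HA : M * Rabs (x - grid_point L k) <= eps / 4).
  { apply Rlt_div_r in Hk; [|lra].
    generalize (Rabs_pos (x - grid_point L k)); nra. }
  set (A := M * Rabs (x - grid_point L k)) in *; clearbody A.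
  unfold Rabs in *; repeat destruct (Rcase_abs _); lra.
Qed.

Lemma equi_lipschitz_extraction (L B M : R) (F : nat -> nat -> R -> R) : 0 < L -> 0 <= M ->
  (forall i n x, 0 < x < L -> Rabs (F i n x) <= B) ->
  (forall i n, lipschitz_on (fun x => 0 < x < L) M (F i n)) ->
  exists d : nat -> nat, (forall n, (n <= d n)%nat) /\
    forall i x, 0 < x < L -> ex_finite_lim_seq (fun n => F i (d n) x).
Proof.
  intros HL HM HB Hl.
  set (U := fun k n => F (fst (Cantor.of_nat k)) n (grid_point L (snd (Cantor.of_nat k)))).
  destruct (@diagonal_extraction U B) as [d [Hd Hcv]].
  { intros k n; apply HB, grid_point_in, HL. }
  exists d; split; [exact Hd|]; intros i.
  apply (equi_lipschitz_cv HL HM); [intros n; apply Hl|]; intros k.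
  generalize (Hcv (Cantor.to_nat (i, k))); unfold U; now rewrite Cantor.cancel_of_to.
Qed.

Definition pointwise_lim (fn : nat -> R -> R) (x : R) : R := real (Lim_seq (fun n => fn n x)).

Lemma is_lim_seq_pointwise_lim (fn : nat -> R -> R) (x : R) :
  ex_finite_lim_seq (fun n => fn n x) -> is_lim_seq (fun n => fn n x) (pointwise_lim fn x).
Proof. intros [l Hl]; unfold pointwise_lim; now rewrite (is_lim_seq_unique _ _ Hl). Qed.

Lemma pointwise_lim_const (fn : nat -> R -> R) (x v : R) :
  (forall n, fn n x = v) -> pointwise_lim fn x = v.
Proof.
  intros H; unfold pointwise_lim.
  rewrite (Lim_seq_ext _ (fun _ => v)) by exact H; now rewrite Lim_seq_const.
Qed.

Lemma eventually_of_extraction (d : nat -> nat) :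
  (forall n, (n <= d n)%nat) -> filterlim d eventually eventually.
Proof. intros Hd P [N HN]; exists N; intros n Hn; apply HN; specialize (Hd n); lia. Qed.

Lemma ex_finite_lim_seq_closed (L v0 vL : R) (fn : nat -> R -> R) :
  (forall n, fn n 0 = v0) -> (forall n, fn n L = vL) ->
  (forall x, 0 < x < L -> ex_finite_lim_seq (fun n => fn n x)) ->
  forall x, 0 <= x <= L -> ex_finite_lim_seq (fun n => fn n x).
Proof.
  intros H0 HL Hcv x Hx.
  destruct (Req_dec x 0) as [->|Hx0].
  { exists v0; now apply (is_lim_seq_ext (fun _ => v0)), is_lim_seq_const. }
  destruct (Req_dec x L) as [->|HxL].
  { exists vL; now apply (is_lim_seq_ext (fun _ => vL)), is_lim_seq_const. }
  apply Hcv; lra.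
Qed.

(** * A priori estimates for one equation of the system *)

Definition lv_slope (L C : R) : R := 2 / L + (1 + C) * L.

Lemma lv_slope_nonneg (L C : R) : 0 < L -> 0 <= C -> 0 <= lv_slope L C.
Proof.
  intros HL HC; unfold lv_slope.
  generalize (Rdiv_lt_0_compat 2 L ltac:(lra) HL); nra.
Qed.

Lemma lv_rhs_lipschitz (c p q p' q' : R) :
  0 <= c -> 0 <= p <= 1 -> 0 <= q <= 1 -> 0 <= p' <= 1 -> 0 <= q' <= 1 ->
  Rabs (p * (1 - p - c * q) - p' * (1 - p' - c * q'))
    <= (1 + c) * Rabs (p - p') + c * Rabs (q - q').
Proof.
  intros Hc Hp Hq Hp' Hq'.
  replace (p * (1 - p - c * q) - p' * (1 - p' - c * q'))
    with ((p - p') * (1 - p - p' - c * q) + - (c * p') * (q - q')) by ring.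
  eapply Rle_trans; [apply Rabs_triang|]; rewrite !Rabs_mult.
  assert (Rabs (1 - p - p' - c * q) <= 1 + c) by (unfold Rabs; destruct (Rcase_abs _); nra).
  assert (Rabs (- (c * p')) <= c)
    by (rewrite Rabs_Ropp, Rabs_mult, (Rabs_pos_eq c), (Rabs_pos_eq p') by lra; nra).
  generalize (Rabs_pos (p - p')) (Rabs_pos (q - q')); nra.
Qed.

Record lv_component (L c : R) (f f' f'' g : R -> R) : Prop := LVComponent {
  lvc_cont : cont_on_closed L f;
  lvc_diff : twice_diff_on_open L f f' f'';
  lvc_eq : forall x, 0 < x < L -> - f'' x = f x * (1 - f x - c * g x);
  lvc_range : forall x, 0 < x < L -> 0 <= f x <= 1 /\ 0 <= g x <= 1 }.

Section Component.

Variables (L c C : R) (f f' f'' g : R -> R).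
Hypotheses (HL : 0 < L) (Hc : 0 <= c <= C) (Hf : lv_component L c f f' f'' g).

Lemma lvc_d2_le : forall x, 0 < x < L -> Rabs (f'' x) <= (1 + C) * Rabs (f x).
Proof.
  intros x Hx; destruct (lvc_range Hf Hx) as [Hfx Hgx].
  replace (f'' x) with (- (f x * (1 - f x - c * g x))) by (rewrite <- (lvc_eq Hf Hx); ring).
  rewrite Rabs_Ropp, Rabs_mult, (Rmult_comm (1 + C)).
  apply Rmult_le_compat_l; [apply Rabs_pos|]; unfold Rabs; destruct (Rcase_abs _); nra.
Qed.

Lemma lvc_d2_bound : forall x, 0 < x < L -> Rabs (f'' x) <= 1 + C.
Proof.
  intros x Hx; generalize (lvc_d2_le Hx); destruct (lvc_range Hf Hx) as [Hfx _].
  rewrite (Rabs_pos_eq (f x)) by lra; nra.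
Qed.

Lemma lvc_d1_lipschitz : lipschitz_on (fun x => 0 < x < L) (1 + C) f'.
Proof.
  apply (lipschitz_of_derive_bound (df := f'')); [|exact lvc_d2_bound].
  intros x Hx; apply (lvc_diff Hf Hx).
Qed.

Lemma lvc_d1_bound : forall x, 0 < x < L -> Rabs (f' x) <= lv_slope L C.
Proof.
  apply (derive_bound_of_unit_valued (f := f) HL); [lra | | | exact lvc_d1_lipschitz].
  - intros x Hx; apply (lvc_diff Hf Hx).
  - intros x Hx; apply (lvc_range Hf Hx).
Qed.

Lemma lvc_lipschitz : lipschitz_on (fun x => 0 <= x <= L) (lv_slope L C) f.
Proof.
  apply (lipschitz_on_closure HL); [apply lv_slope_nonneg; lra | exact (lvc_cont Hf) |].
  apply (lipschitz_of_derive_bound (df := f')); [|exact lvc_d1_bound].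
  intros x Hx; apply (lvc_diff Hf Hx).
Qed.

Lemma lvc_d2_lipschitz : lipschitz_on (fun x => 0 <= x <= L) (lv_slope L C) g ->
  lipschitz_on (fun x => 0 < x < L) ((1 + 2 * C) * lv_slope L C) f''.
Proof.
  intros Hg x y Hx Hy.
  destruct (lvc_range Hf Hx) as [Hfx Hgx]; destruct (lvc_range Hf Hy) as [Hfy Hgy].
  replace (f'' x - f'' y) with (- (f x * (1 - f x - c * g x) - f y * (1 - f y - c * g y)))
    by (rewrite <- (lvc_eq Hf Hx), <- (lvc_eq Hf Hy); ring).
  rewrite Rabs_Ropp; eapply Rle_trans; [apply lv_rhs_lipschitz; lra|].
  set (D := lv_slope L C * Rabs (x - y)).
  assert (HD : 0 <= D) by (apply Rmult_le_pos; [apply lv_slope_nonneg; lra | apply Rabs_pos]).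
  assert (Hfl : (1 + c) * Rabs (f x - f y) <= (1 + c) * D)
    by (apply Rmult_le_compat_l; [lra | apply lvc_lipschitz; lra]).
  assert (Hgl : c * Rabs (g x - g y) <= c * D) by (apply Rmult_le_compat_l; [lra | apply Hg; lra]).
  unfold D in *; nra.
Qed.

Lemma lvc_pos : (exists y, 0 < y < L /\ f y <> 0) -> forall x, 0 < x < L -> 0 < f x.
Proof.
  intros [y [Hy Hfy]] x Hx; destruct (lvc_range Hf Hx) as [[Hf0 _] _].
  destruct (Rle_lt_or_eq_dec _ _ Hf0) as [Hpos | Hzero]; [exact Hpos | exfalso; apply Hfy].
  (* an interior zero of [f >= 0] is a minimum, hence a double zero *)
  refine (linear_ode_zero (K := 1 + C) ltac:(lra) (lvc_diff Hf) lvc_d2_le Hx (eq_sym Hzero) _ Hy).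
  apply (is_derive_interior_min Hx (proj1 (lvc_diff Hf Hx))).
  intros z Hz; rewrite <- Hzero; apply (lvc_range Hf Hz).
Qed.

Lemma lvc_lt_1 : 0 < c -> (forall x, 0 < x < L -> 0 < g x) -> forall x, 0 < x < L -> f x < 1.
Proof.
  intros Hc0 Hg x Hx; destruct (lvc_range Hf Hx) as [[_ Hf1] _].
  destruct (Rle_lt_or_eq_dec _ _ Hf1) as [Hlt | Hone]; [exact Hlt | exfalso].
  assert (Hmax : f'' x <= 0).
  { apply (second_derive_interior_max Hx (fun z Hz => proj1 (lvc_diff Hf Hz))
                                      (proj2 (lvc_diff Hf Hx))).
    intros z Hz; rewrite Hone; apply (lvc_range Hf Hz). }
  generalize (lvc_eq Hf Hx) (Hg x Hx); rewrite Hone; nra.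
Qed.

End Component.


(** * Barriers and their limits *)

Record lv_pair := LVPair {
  lv_phi : R -> R; lv_dphi : R -> R; lv_d2phi : R -> R;
  lv_psi : R -> R; lv_dpsi : R -> R; lv_d2psi : R -> R }.

Record lv_solution (L a b : R) (s : lv_pair) : Prop := LVSolution {
  lv_cont_phi : cont_on_closed L (lv_phi s);
  lv_cont_psi : cont_on_closed L (lv_psi s);
  lv_diff_phi : twice_diff_on_open L (lv_phi s) (lv_dphi s) (lv_d2phi s);
  lv_diff_psi : twice_diff_on_open L (lv_psi s) (lv_dpsi s) (lv_d2psi s);
  lv_eq_phi : forall x, 0 < x < L ->
    - lv_d2phi s x = lv_phi s x * (1 - lv_phi s x - a * lv_psi s x);
  lv_eq_psi : forall x, 0 < x < L ->
    - lv_d2psi s x = lv_psi s x * (1 - b * lv_phi s x - lv_psi s x);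
  lv_phi_0 : lv_phi s 0 = 0;
  lv_phi_L : lv_phi s L = 0;
  lv_psi_0 : lv_psi s 0 = 1;
  lv_psi_L : lv_psi s L = 1 }.

Definition lv_unit_bounds (L : R) (s : lv_pair) : Prop :=
  forall x, 0 < x < L -> 0 <= lv_phi s x <= 1 /\ 0 <= lv_psi s x <= 1.

Definition lv_strict_unit_bounds (L : R) (s : lv_pair) : Prop :=
  forall x, 0 < x < L -> 0 < lv_phi s x < 1 /\ 0 < lv_psi s x < 1.

Lemma barrier_existsE (L a b : R) :
  barrier_exists L a b <-> exists s, lv_solution L a b s /\ lv_strict_unit_bounds L s.
Proof.
  split.
  - intros [phi [psi [Hc1 [Hc2 [p1 [p2 [s1 [s2 (Hd1 & Hd2 & Heq & B1 & B2 & B3 & B4 & Hb)]]]]]]]].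
    exists (LVPair phi p1 p2 psi s1 s2); split; [|exact Hb].
    constructor; simpl; auto; intros x Hx; apply Heq, Hx.
  - intros [[phi p1 p2 psi s1 s2] [[] Hb]]; simpl in *.
    exists phi, psi; split; [assumption | split; [assumption|]].
    exists p1, p2, s1, s2; do 2 (split; [assumption|]).
    split; [intros x Hx; split; auto|].
    repeat (split; [assumption|]); exact Hb.
Qed.

Lemma lv_unit_bounds_of_strict (L : R) (s : lv_pair) :
  lv_strict_unit_bounds L s -> lv_unit_bounds L s.
Proof. intros Hb x Hx; destruct (Hb x Hx); lra. Qed.

Lemma lv_component_phi (L a b : R) (s : lv_pair) : lv_solution L a b s -> lv_unit_bounds L s ->
  lv_component L a (lv_phi s) (lv_dphi s) (lv_d2phi s) (lv_psi s).
Proof. intros Hs Hb; constructor; [apply Hs | apply Hs | apply Hs | exact Hb]. Qed.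

Lemma lv_component_psi (L a b : R) (s : lv_pair) : lv_solution L a b s -> lv_unit_bounds L s ->
  lv_component L b (lv_psi s) (lv_dpsi s) (lv_d2psi s) (lv_phi s).
Proof.
  intros Hs Hb; constructor; [apply Hs | apply Hs | | intros x Hx; generalize (Hb x Hx); tauto].
  intros x Hx; rewrite (lv_eq_psi Hs Hx); ring.
Qed.

Lemma lv_exists_a_psi_lt_1 (L a b : R) (s : lv_pair) : 0 < L ->
  lv_solution L a b s -> lv_strict_unit_bounds L s -> exists c, 0 < c < L /\ a * lv_psi s c < 1.
Proof.
  intros HL Hs Hb.
  destruct (second_derive_neg_of_peak (x0 := L / 2) HL (lv_cont_phi Hs) (lv_diff_phi Hs))
    as [c [Hc Hneg]];
    [lra | rewrite (lv_phi_0 Hs); apply Hb; lra | rewrite (lv_phi_L Hs); apply Hb; lra |].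
  exists c; split; [exact Hc|].
  destruct (Hb c Hc) as [[Hp0 Hp1] _]; generalize (lv_eq_phi Hs Hc); intros Heq.
  assert (0 < 1 - lv_phi s c - a * lv_psi s c) by (apply (Rmult_lt_reg_l (lv_phi s c)); lra).
  lra.
Qed.

Lemma lv_phi_nonzero (L a b x0 : R) (s : lv_pair) : 0 < L -> 1 < a ->
  lv_solution L a b s -> lv_unit_bounds L s -> 0 <= x0 <= L -> a * lv_psi s x0 <= 1 ->
  exists x, 0 < x < L /\ lv_phi s x <> 0.
Proof.
  intros HL Ha Hs Hb Hx0 Hax0.
  destruct (classic (exists x, 0 < x < L /\ lv_phi s x <> 0)) as [|Hz]; [assumption | exfalso].
  assert (Hphi0 : forall x, 0 < x < L -> lv_phi s x = 0)
    by (intros x Hx; apply NNPP; intros Hne; apply Hz; now exists x).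
  (* with [phi = 0] the equation makes [psi] concave, and [psi <= 1 = psi 0 = psi L] *)
  assert (Hpsi1 : forall x, 0 < x < L -> lv_psi s x = 1).
  { intros x Hx; destruct (Hb x Hx) as [_ [_ Hle]].
    destruct (Rle_lt_or_eq_dec _ _ Hle) as [Hlt|]; [exfalso | assumption].
    destruct (second_derive_pos_of_valley HL (lv_cont_psi Hs) (lv_diff_psi Hs) Hx)
      as [c [Hc Hpos]]; [rewrite (lv_psi_0 Hs); lra | rewrite (lv_psi_L Hs); lra |].
    generalize (lv_eq_psi Hs Hc) (Hb c Hc); rewrite (Hphi0 c Hc); intros; nra. }
  assert (lv_psi s x0 = 1).
  { destruct (Req_dec x0 0) as [->|]; [apply (lv_psi_0 Hs)|].
    destruct (Req_dec x0 L) as [->|]; [apply (lv_psi_L Hs) | apply Hpsi1; lra]. }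
  nra.
Qed.

Lemma lv_strict_unit_bounds_of_nonzero (L a b : R) (s : lv_pair) : 0 < L -> 0 < a -> 0 < b ->
  lv_solution L a b s -> lv_unit_bounds L s -> (exists x, 0 < x < L /\ lv_phi s x <> 0) ->
  lv_strict_unit_bounds L s.
Proof.
  intros HL Ha Hb Hs Hbd Hnz.
  assert (Hphi := lv_component_phi Hs Hbd); assert (Hpsi := lv_component_psi Hs Hbd).
  assert (Hphi_pos := lvc_pos (c := a) (C := a) ltac:(lra) Hphi Hnz).
  assert (Hpsi_nz : exists x, 0 < x < L /\ lv_psi s x <> 0).
  { destruct (interior_approx (x := 0) (eps := 1 / 2) HL (lv_cont_psi Hs)) as [x [Hx [_ Hpx]]];
      [lra | lra |].
    exists x; split; [exact Hx|]; rewrite (lv_psi_0 Hs) in Hpx; intros E; rewrite E in Hpx.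
    unfold Rabs in Hpx; destruct (Rcase_abs _); lra. }
  assert (Hpsi_pos := lvc_pos (c := b) (C := b) ltac:(lra) Hpsi Hpsi_nz).
  intros x Hx; split; split; try auto.
  - exact (lvc_lt_1 Hphi Ha Hpsi_pos Hx).
  - exact (lvc_lt_1 Hpsi Hb Hphi_pos Hx).
Qed.

Lemma lv_solutions_extraction (L C : R) (an bn : nat -> R) (s : nat -> lv_pair) (c : nat -> R) :
  0 < L -> (forall n, 0 <= an n <= C /\ 0 <= bn n <= C) ->
  (forall n, lv_solution L (an n) (bn n) (s n)) -> (forall n, lv_unit_bounds L (s n)) ->
  (forall n, 0 < c n < L) ->
  exists d : nat -> nat, (forall n, (n <= d n)%nat) /\ ex_finite_lim_seq (fun n => c (d n)) /\
    forall x, 0 < x < L ->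
      ex_finite_lim_seq (fun n => lv_phi (s (d n)) x) /\
      ex_finite_lim_seq (fun n => lv_psi (s (d n)) x) /\
      ex_finite_lim_seq (fun n => lv_dphi (s (d n)) x) /\
      ex_finite_lim_seq (fun n => lv_dpsi (s (d n)) x).
Proof.
  intros HL Hp Hs Hb Hc.
  assert (HC : 0 <= C) by (generalize (Hp O); lra).
  set (M := lv_slope L C); assert (HM : 0 <= M) by (apply lv_slope_nonneg; lra).
  assert (Hphi := fun n => lv_component_phi (Hs n) (Hb n)).
  assert (Hpsi := fun n => lv_component_psi (Hs n) (Hb n)).
  (* a constant family [fun _ => c n] carries the extraction of the points [c n] along *)
  set (F := fun i n => match i with
                       | O => lv_phi (s n) | 1%nat => lv_psi (s n)
                       | 2%nat => lv_dphi (s n) | 3%nat => lv_dpsi (s n)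
                       | _ => fun _ => c n end).
  destruct (@equi_lipschitz_extraction L (1 + M + L) (M + (1 + C)) F HL ltac:(lra)) as [d [Hd Hcv]].
  - intros [|[|[|[|i]]]] n x Hx; simpl.
    + destruct (Hb n x Hx) as [Hx1 _]; rewrite Rabs_pos_eq; lra.
    + destruct (Hb n x Hx) as [_ Hx1]; rewrite Rabs_pos_eq; lra.
    + generalize (lvc_d1_bound HL (proj1 (Hp n)) (Hphi n) Hx); fold M; lra.
    + generalize (lvc_d1_bound HL (proj2 (Hp n)) (Hpsi n) Hx); fold M; lra.
    + destruct (Hc n); rewrite Rabs_pos_eq; lra.
  - intros [|[|[|[|i]]]] n; simpl.
    + apply (lipschitz_on_mono (D' := fun x => 0 <= x <= L) (k := M)); [intros; lra | lra |].
      exact (lvc_lipschitz HL (proj1 (Hp n)) (Hphi n)).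
    + apply (lipschitz_on_mono (D' := fun x => 0 <= x <= L) (k := M)); [intros; lra | lra |].
      exact (lvc_lipschitz HL (proj2 (Hp n)) (Hpsi n)).
    + apply (lipschitz_on_mono (D' := fun x => 0 < x < L) (k := 1 + C)); [auto | lra |].
      exact (lvc_d1_lipschitz (proj1 (Hp n)) (Hphi n)).
    + apply (lipschitz_on_mono (D' := fun x => 0 < x < L) (k := 1 + C)); [auto | lra |].
      exact (lvc_d1_lipschitz (proj2 (Hp n)) (Hpsi n)).
    + intros x y _ _; rewrite Rminus_eq_0, Rabs_R0; generalize (Rabs_pos (x - y)); nra.
  - exists d; split; [exact Hd|]; split; [apply (Hcv 4%nat (L / 2)); lra|].
    intros x Hx; repeat split;
      [apply (Hcv 0%nat) | apply (Hcv 1%nat) | apply (Hcv 2%nat) | apply (Hcv 3%nat)]; exact Hx.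
Qed.

Section Limit.

Variables (L C a b c0 : R) (an bn : nat -> R) (s : nat -> lv_pair) (c : nat -> R).
Hypotheses (HL : 0 < L) (Hp : forall n, 0 <= an n <= C /\ 0 <= bn n <= C)
  (Hs : forall n, lv_solution L (an n) (bn n) (s n)) (Hb : forall n, lv_unit_bounds L (s n))
  (Hc : forall n, 0 < c n < L /\ an n * lv_psi (s n) (c n) < 1)
  (Han : is_lim_seq an a) (Hbn : is_lim_seq bn b) (Hcn : is_lim_seq c c0)
  (Hcv : forall x, 0 < x < L ->
     ex_finite_lim_seq (fun n => lv_phi (s n) x) /\ ex_finite_lim_seq (fun n => lv_psi (s n) x) /\
     ex_finite_lim_seq (fun n => lv_dphi (s n) x) /\ ex_finite_lim_seq (fun n => lv_dpsi (s n) x)).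

(* The second derivatives of the limit are read off the equations. *)
Definition lv_limit : lv_pair :=
  let phi := pointwise_lim (fun n => lv_phi (s n)) in
  let psi := pointwise_lim (fun n => lv_psi (s n)) in
  LVPair phi (pointwise_lim (fun n => lv_dphi (s n)))
         (fun x => - (phi x * (1 - phi x - a * psi x)))
         psi (pointwise_lim (fun n => lv_dpsi (s n)))
         (fun x => - (psi x * (1 - psi x - b * phi x))).

Let Hphi n := lv_component_phi (Hs n) (Hb n).
Let Hpsi n := lv_component_psi (Hs n) (Hb n).
Let Hlip_phi n := lvc_lipschitz HL (proj1 (Hp n)) (Hphi n).
Let Hlip_psi n := lvc_lipschitz HL (proj2 (Hp n)) (Hpsi n).

Let HC : 0 <= C.
Proof. generalize (Hp O); lra. Qed.

Let HK2 : 0 <= (1 + 2 * C) * lv_slope L C.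
Proof. apply Rmult_le_pos; [lra | now apply lv_slope_nonneg]. Qed.

Lemma lv_limit_phi_cv : forall x, 0 <= x <= L ->
  is_lim_seq (fun n => lv_phi (s n) x) (lv_phi lv_limit x).
Proof.
  intros x Hx; apply is_lim_seq_pointwise_lim; revert x Hx.
  apply (ex_finite_lim_seq_closed (v0 := 0) (vL := 0)); intros n; [apply (Hs n) | apply (Hs n) |].
  apply Hcv.
Qed.

Lemma lv_limit_psi_cv : forall x, 0 <= x <= L ->
  is_lim_seq (fun n => lv_psi (s n) x) (lv_psi lv_limit x).
Proof.
  intros x Hx; apply is_lim_seq_pointwise_lim; revert x Hx.
  apply (ex_finite_lim_seq_closed (v0 := 1) (vL := 1)); intros n; [apply (Hs n) | apply (Hs n) |].
  apply Hcv.
Qed.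

Lemma lv_limit_d1_cv : forall x, 0 < x < L ->
  is_lim_seq (fun n => lv_dphi (s n) x) (lv_dphi lv_limit x) /\
  is_lim_seq (fun n => lv_dpsi (s n) x) (lv_dpsi lv_limit x).
Proof.
  intros x Hx; destruct (Hcv Hx) as (_ & _ & Hdphi & Hdpsi).
  split; apply is_lim_seq_pointwise_lim; assumption.
Qed.

Lemma lv_limit_d2_cv : forall x, 0 < x < L ->
  is_lim_seq (fun n => lv_d2phi (s n) x) (lv_d2phi lv_limit x) /\
  is_lim_seq (fun n => lv_d2psi (s n) x) (lv_d2psi lv_limit x).
Proof.
  intros x Hx.
  assert (Hrhs : forall (u v w : nat -> R) (p q k : R),
            is_lim_seq u p -> is_lim_seq v q -> is_lim_seq w k ->
            is_lim_seq (fun n => - (u n * (1 - u n - w n * v n))) (- (p * (1 - p - k * q)))).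
  { intros u v w p q k Hu Hv Hw.
    apply (is_lim_seq_opp _ (p * (1 - p - k * q))), is_lim_seq_mult'; [exact Hu|].
    apply is_lim_seq_minus'; [apply is_lim_seq_minus'; [apply is_lim_seq_const | exact Hu]|].
    now apply is_lim_seq_mult'. }
  assert (Hx' : 0 <= x <= L) by lra.
  split; eapply is_lim_seq_ext;
    [| apply (Hrhs _ _ _ _ _ _ (lv_limit_phi_cv Hx') (lv_limit_psi_cv Hx') Han) |
     | apply (Hrhs _ _ _ _ _ _ (lv_limit_psi_cv Hx') (lv_limit_phi_cv Hx') Hbn)];
    intros n; simpl.
  - generalize (lv_eq_phi (Hs n) Hx); lra.
  - generalize (lv_eq_psi (Hs n) Hx); lra.
Qed.

Lemma lv_limit_bounds : lv_unit_bounds L lv_limit.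
Proof.
  intros x Hx; assert (Hx' : 0 <= x <= L) by lra.
  split; [apply (is_lim_seq_between (lv_limit_phi_cv Hx'))
         | apply (is_lim_seq_between (lv_limit_psi_cv Hx'))];
    intros n; apply (Hb n Hx).
Qed.

Lemma lv_limit_diff_phi :
  twice_diff_on_open L (lv_phi lv_limit) (lv_dphi lv_limit) (lv_d2phi lv_limit).
Proof.
  intros x Hx; split; revert x Hx.
  - apply (is_derive_pointwise_lim (K := 1 + C) (fn := fun n => lv_phi (s n))
             (dfn := fun n => lv_dphi (s n))); [lra | | | | apply lv_limit_d1_cv].
    + intros n x Hx; apply (lv_diff_phi (Hs n) Hx).
    + intros n; exact (lvc_d1_lipschitz (proj1 (Hp n)) (Hphi n)).
    + intros x Hx; apply lv_limit_phi_cv; lra.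
  - apply (is_derive_pointwise_lim HK2 (fn := fun n => lv_dphi (s n))
             (dfn := fun n => lv_d2phi (s n))); [| | apply lv_limit_d1_cv | apply lv_limit_d2_cv].
    + intros n x Hx; apply (lv_diff_phi (Hs n) Hx).
    + intros n; exact (lvc_d2_lipschitz HL (proj1 (Hp n)) (Hphi n) (Hlip_psi n)).
Qed.

Lemma lv_limit_diff_psi :
  twice_diff_on_open L (lv_psi lv_limit) (lv_dpsi lv_limit) (lv_d2psi lv_limit).
Proof.
  intros x Hx; split; revert x Hx.
  - apply (is_derive_pointwise_lim (K := 1 + C) (fn := fun n => lv_psi (s n))
             (dfn := fun n => lv_dpsi (s n))); [lra | | | | apply lv_limit_d1_cv].
    + intros n x Hx; apply (lv_diff_psi (Hs n) Hx).
    + intros n; exact (lvc_d1_lipschitz (proj2 (Hp n)) (Hpsi n)).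
    + intros x Hx; apply lv_limit_psi_cv; lra.
  - apply (is_derive_pointwise_lim HK2 (fn := fun n => lv_dpsi (s n))
             (dfn := fun n => lv_d2psi (s n))); [| | apply lv_limit_d1_cv | apply lv_limit_d2_cv].
    + intros n x Hx; apply (lv_diff_psi (Hs n) Hx).
    + intros n; exact (lvc_d2_lipschitz HL (proj2 (Hp n)) (Hpsi n) (Hlip_phi n)).
Qed.

Lemma lv_limit_solution : lv_solution L a b lv_limit.
Proof.
  assert (HM := lv_slope_nonneg HL HC).
  constructor.
  - apply (cont_on_closed_of_lipschitz HM), (lipschitz_on_pointwise_lim Hlip_phi lv_limit_phi_cv).
  - apply (cont_on_closed_of_lipschitz HM), (lipschitz_on_pointwise_lim Hlip_psi lv_limit_psi_cv).
  - exact lv_limit_diff_phi.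
  - exact lv_limit_diff_psi.
  - intros x Hx; simpl; ring.
  - intros x Hx; simpl; ring.
  all: apply pointwise_lim_const; intros n; apply (Hs n).
Qed.

Lemma lv_limit_touch : 0 <= c0 <= L /\ a * lv_psi lv_limit c0 <= 1.
Proof.
  assert (Hc0 : 0 <= c0 <= L) by (apply (is_lim_seq_between Hcn); intros n; destruct (Hc n); lra).
  split; [exact Hc0|].
  assert (Hpsi_c : is_lim_seq (fun n => lv_psi (s n) (c n)) (lv_psi lv_limit c0)).
  { apply (is_lim_seq_moving_point (M := lv_slope L C) Hcn (lv_limit_psi_cv Hc0)); intros n.
    destruct (Hc n) as [Hcn' _]; apply Hlip_psi; lra. }
  change (Rbar_le (a * lv_psi lv_limit c0) 1).
  apply (is_lim_seq_le (fun n => an n * lv_psi (s n) (c n)) (fun _ => 1)).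
  - intros n; apply Rlt_le, Hc.
  - exact (is_lim_seq_mult' _ _ _ _ Han Hpsi_c).
  - apply is_lim_seq_const.
Qed.

Lemma lv_limit_barrier : 1 < a -> 0 < b ->
  lv_solution L a b lv_limit /\ lv_strict_unit_bounds L lv_limit.
Proof.
  intros Ha Hb0; split; [exact lv_limit_solution|].
  destruct lv_limit_touch as [Hc0 Htouch].
  apply (lv_strict_unit_bounds_of_nonzero (a := a) HL ltac:(lra) Hb0 lv_limit_solution
           lv_limit_bounds).
  exact (lv_phi_nonzero HL Ha lv_limit_solution lv_limit_bounds Hc0 Htouch).
Qed.

End Limit.


Theorem proposition2 (L : R) (an bn : nat -> R) (a b : R) :
  0 < L ->
  (forall n, 0 < an n /\ Rmax (an n) 1 < bn n) ->
  (forall n, barrier_exists L (an n) (bn n)) ->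
  is_lim_seq an a -> is_lim_seq bn b ->
  0 < a -> Rmax a 1 < b -> 1 < a ->
  barrier_exists L a b.
Proof.
  intros HL Hab Hbar Ha Hb Ha0 Hb1 Ha1.
  assert (Hb0 : 0 < b) by (generalize (Rmax_r a 1); lra).
  destruct (is_lim_seq_bounded Ha) as [Ca HCa]; destruct (is_lim_seq_bounded Hb) as [Cb HCb].
  assert (Hp : forall n, 0 <= an n <= Ca + Cb /\ 0 <= bn n <= Ca + Cb).
  { intros n; generalize (Hab n) (Rmax_r (an n) 1) (Rle_abs (an n)) (Rle_abs (bn n))
      (Rabs_pos (an n)) (Rabs_pos (bn n)) (HCa n) (HCb n); lra. }
  assert (Hsel : forall n, exists sc : lv_pair * R,
            lv_solution L (an n) (bn n) (fst sc) /\ lv_strict_unit_bounds L (fst sc) /\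
            0 < snd sc < L /\ an n * lv_psi (fst sc) (snd sc) < 1).
  { intros n; destruct (proj1 (barrier_existsE L (an n) (bn n)) (Hbar n)) as [s [Hs Hbd]].
    destruct (lv_exists_a_psi_lt_1 HL Hs Hbd) as [c Hc]; now exists (s, c). }
  destruct (choice _ Hsel) as [sc Hsc].
  set (s := fun n => fst (sc n)); set (c := fun n => snd (sc n)).
  destruct (@lv_solutions_extraction L (Ca + Cb) an bn s c HL Hp) as [d [Hd [[c0 Hc0] Hcv]]];
    try (intros n; apply (Hsc n)).
  { intros n; apply lv_unit_bounds_of_strict, (Hsc n). }
  assert (Hsub : forall u l, is_lim_seq u l -> is_lim_seq (fun n => u (d n)) l)
    by (intros u l; apply is_lim_seq_subseq, eventually_of_extraction, Hd).
  apply barrier_existsE; eexists.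
  exact (lv_limit_barrier HL (fun n => Hp (d n)) (fun n => proj1 (Hsc (d n)))
           (fun n => lv_unit_bounds_of_strict (proj1 (proj2 (Hsc (d n)))))
           (fun n => proj2 (proj2 (Hsc (d n)))) (Hsub _ _ Ha) (Hsub _ _ Hb) Hc0 Hcv Ha1 Hb0).
Qed.
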